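(* Let $\ell,t,k,d,m$ be positive integers and let $\mathbb{F}$ be a finite field. Suppose that for some integer $b>\ell/k$ there is an $\mathbb{F}$-linear code $C\subseteq(\mathbb{F}^b)^k$ with rate at least $\ell/(kb)$ and distance at least $dt+1$. Then there is a $t$-private $k$-server linear HSS for $\mathsf{POLY}_{d,m}(\mathbb{F})^\ell$ (with $\mathsf{Share}$ being $t$-private CNF sharing) with download rate $\ell/(kb)$ and upload cost $k\ell m\binom{k-1}{t}\log_2|\mathbb{F}|$.
   Context: $\mathsf{POLY}_{d,m}(\mathbb{F})$ is the class of all polynomials in $\mathbb{F}[X_1,\dots,X_m]$ of total degree at most $d$, viewed as functions $\mathbb{F}^m\to\mathbb{F}$. For a class $\mathcal{F}$ of functions $\mathcal{X}^m\to\mathcal{Y}$, $\mathcal{F}^\ell$ is the class of functions $\mathcal{X}^{\ell m}\to\mathcal{Y}^\ell$ mapping $(x_{i,r})_{i\in[m],r\in[\ell]}$ to $(f_1(\mathbf{x}_1),\dots,f_\ell(\mathbf{x}_\ell))$, $\mathbf{x}_r=(x_{1,r},\dots,x_{m,r})$, $f_r\in\mathcal{F}$, with all $\ell m$ inputs shared independently. A $k$-server HSS $(\mathsf{Share},\mathsf{Eval},\mathsf{Rec})$: randomized $\mathsf{Share}$ maps each input to $k$ input shares; server $j$ computes output share $y^{(j)}=\mathsf{Eval}(f,j,\cdot)$ from its input shares; $\mathsf{Rec}(y^{(1)},\dots,y^{(k)})$ equals the function value with probability 1. $t$-private: any $\le t$ servers' input shares have a distribution independent of the input. $|w|=\log_2$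 of the size of $w$'s domain; upload cost $\sum_{i,j}|x_i^{(j)}|$; download cost $\sum_j|y^{(j)}|$; download rate $\log_2|\mathcal{Y}|/$download cost. Linear HSS: $\mathcal{X}=\mathbb{F}$, $\mathsf{Share}(x,\mathbf{r})$ $\mathbb{F}$-linear in $x$ and uniform random $\mathbf{r}$, output shares in $\mathbb{F}^{b_j}$, $\mathsf{Rec}$ $\mathbb{F}$-linear. $t$-private $k$-party CNF sharing of $x$: uniformly random $x_T$ for $T\subseteq[k]$, $|T|=t$, with $\sum_T x_T=x$; party $j$ gets $(x_T)_{j\notin T}$. $\mathbb{F}$-linear code $C\subseteq(\mathbb{F}^b)^k$: $\mathbb{F}$-subspace; rate $\dim_{\mathbb{F}}C/(bk)$; distance = minimum over distinct codewords of the number of coordinates $i\in[k]$ where they differ. *)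

From HB Require Import structures.
From mathcomp Require Import all_boot all_order all_algebra.
From mathcomp Require Import mpoly.
From Stdlib Require Rdefinitions Rpower.
From mathcomp Require Import Rstruct.
Set Implicit Arguments. Unset Strict Implicit. Unset Printing Implicit Defensive.
Import Order.TTheory GRing.Theory Num.Theory.
Local Open Scope ring_scope.

(* |w| = log_2 of the size of the domain of w. *)
Definition log2 (N : nat) : Rdefinitions.R := Rpower.ln (N%:R) / Rpower.ln 2%:R.

(* An F-linear code C ⊆ (F^b)^k is a subspace of k×b matrices over F:
   row i of a codeword is its i-th coordinate (a symbol in F^b). *)
Definition code_rate (F : fieldType) (k b : nat) (C : {vspace 'M[F]_(k, b)}) : rat :=
  (\dim C)%:R / (b * k)%:R.

Definition code_dist_ge (F : fieldType) (k b : nat) (C : {vspace 'M[F]_(k, b)})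
    (D : nat) : Prop :=
  forall c c' : 'M[F]_(k, b), c \in C -> c' \in C -> c != c' ->
    (D <= #|[set i : 'I_k | row i c != row i c']|)%N.

(* polynomials in F[X_1..X_m] of total degree at most d
   (msize p = 1 + total degree, 0 for p = 0). *)
Definition inPOLY (F : ringType) (d m : nat) (p : {mpoly F[m]}) : bool :=
  (msize p <= d.+1)%N.

Definition tsets (k t : nat) := {T : {set 'I_k} | #|T| == t}.

(* a CNF sharing (x_T)_{|T|=t} of one input; it shares x iff sum_T x_T = x.
   Choosing such a vector uniformly at random among those with sum x is
   t-private k-party CNF sharing of x. *)
Definition cnf_vec (F : finFieldType) (k t : nat) := {ffun tsets k t -> F}.

Definition cnf_valid (F : finFieldType) (k t : nat) (x : F) (rho : cnf_vec F k t) :=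
  \sum_(T : tsets k t) rho T == x.

(* party j's CNF share (x_T)_{j ∉ T}, encoded as the vector in which the
   entries x_T with j ∈ T (not given to party j) are zeroed out. *)
Definition cnf_share (F : finFieldType) (k t : nat) (j : 'I_k) (rho : cnf_vec F k t)
  : cnf_vec F k t :=
  [ffun T : tsets k t => if j \notin val T then rho T else 0].

Definition cnf_share_len (k t : nat) (j : 'I_k) : nat :=
  #|[pred T : tsets k t | j \notin val T]|.

Definition joint_cnf (F : finFieldType) (k t l m : nat) :=
  {ffun 'I_l * 'I_m -> cnf_vec F k t}.

Definition joint_valid (F : finFieldType) (k t l m : nat)
    (x : 'I_l -> 'I_m -> F) (rho : joint_cnf F k t l m) : bool :=
  [forall ri : 'I_l * 'I_m, cnf_valid (x ri.1 ri.2) (rho ri)].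

Definition joint_share (F : finFieldType) (k t l m : nat) (j : 'I_k)
    (rho : joint_cnf F k t l m) : {ffun 'I_l * 'I_m -> cnf_vec F k t} :=
  [ffun ri => cnf_share j (rho ri)].

(* t-privacy of the (uniformly random) sharing: for any set S of at most t
   servers, the distribution of their joint view is independent of the input.
   Since for each input the randomness is uniform over the finite set of valid
   sharings, and all these sets have the same size, this says that every view
   has the same number of preimages among valid sharings for every input. *)
Definition cnf_t_private (F : finFieldType) (k t l m : nat) : Prop :=
  forall (S : {set 'I_k}), (#|S| <= t)%N ->
  forall (x x' : 'I_l -> 'I_m -> F)
         (V : {ffun 'I_k -> {ffun 'I_l * 'I_m -> cnf_vec F k t}}),
    #|[set rho : joint_cnf F k t l m | joint_valid x rho &
        [forall j in S, joint_share j rho == V j]]|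
    = #|[set rho : joint_cnf F k t l m | joint_valid x' rho &
        [forall j in S, joint_share j rho == V j]]|.

(* A t-private k-server linear HSS for POLY_{d,m}(F)^l whose Share is CNF
   sharing, with output share of server j in F^(bj j):
   - Eval P j : server j's output share, computed from its input shares only
     (its argument is exactly server j's view);
   - Rec : F-linear map (F^(b_1) x ... x F^(b_k)) -> F^l;
   - correctness with probability 1, i.e. for every valid random sharing
     (each valid sharing has positive probability);
   - t-privacy of the sharing. *)
Definition Rec_linear (F : fieldType) (k l : nat) (bj : 'I_k -> nat)
    (Rec : (forall j : 'I_k, 'rV[F]_(bj j)) -> 'I_l -> F) : Prop :=
  forall (c : F) (y y' : forall j : 'I_k, 'rV[F]_(bj j)) (r : 'I_l),
    Rec (fun j => c *: y j + y' j) r = c * Rec y r + Rec y' r.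

Definition is_CNF_linear_HSS (F : finFieldType) (l t k d m : nat)
    (bj : 'I_k -> nat)
    (Eval : forall (P : 'I_l -> {mpoly F[m]}) (j : 'I_k),
              {ffun 'I_l * 'I_m -> cnf_vec F k t} -> 'rV[F]_(bj j))
    (Rec : (forall j : 'I_k, 'rV[F]_(bj j)) -> 'I_l -> F) : Prop :=
  [/\ Rec_linear Rec,
      (forall (P : 'I_l -> {mpoly F[m]}), (forall r, inPOLY d (P r)) ->
       forall (x : 'I_l -> 'I_m -> F) (rho : joint_cnf F k t l m),
         joint_valid x rho ->
         forall r : 'I_l,
           Rec (fun j => Eval P j (joint_share j rho)) r = (P r).@[x r])
    & cnf_t_private F k t l m].

Definition download_cost (F : finFieldType) (k : nat) (bj : 'I_k -> nat) : Rdefinitions.R :=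
  \sum_(j < k) log2 (#|F| ^ bj j).

Definition download_rate (F : finFieldType) (k l : nat) (bj : 'I_k -> nat) : Rdefinitions.R :=
  log2 (#|F| ^ l) / download_cost F bj.

Definition cnf_upload_cost (F : finFieldType) (k t l m : nat) : Rdefinitions.R :=
  \sum_(ri : 'I_l * 'I_m) \sum_(j < k) log2 (#|F| ^ cnf_share_len t j).

(* Substituting x_i = sum_T x_{i,T} into P_r gives a polynomial of degree at
   most d in the CNF shares, and each of its monomials involves at most d shares,
   so it is unknown only to the set U of at most d t servers j lying in one of
   the corresponding T.  As C has distance greater than d t, l independent
   codewords g_1..g_l stay independent after erasing the rows in U, so there is
   a matrix W_{U,r}, zero on the rows of U, whose pairing with g_r' is
   [r = r'].  Server j outputs row j of
   sum_r sum_mono coef * mono(shares) * W_{U(mono),r}, which it can compute;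
   pairing the assembled matrix with g_r returns P_r(x_r).  CNF sharing is
   t-private because adding a constant to x_T with S ⊆ T leaves the views of S
   unchanged. *)
From HB Require Import structures.
From mathcomp Require Import all_boot all_order all_algebra.
From mathcomp Require Import mpoly.
From Stdlib Require Rdefinitions Rpower.
From mathcomp Require Import Rstruct.
From mathcomp Require Import ring zify.
Set Implicit Arguments. Unset Strict Implicit. Unset Printing Implicit Defensive.
Import Order.TTheory GRing.Theory Num.Theory.
Local Open Scope ring_scope.

Lemma log2X (N e : nat) : (0 < N)%N -> log2 (N ^ e) = e%:R * log2 N.
Proof.
move=> N_gt0; rewrite /log2 natrX -RpowE Rpower.ln_pow -?INRE ?mulrA //.
by rewrite INRE; apply/RltP; rewrite ltr0n.
Qed.

Lemma log2_gt0 (N : nat) : (1 < N)%N -> 0 < log2 N.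
Proof.
move=> N_gt1; suff ln_gt0 n : (1 < n)%N -> 0 < Rpower.ln n%:R.
  by rewrite /log2 divr_gt0 ?ln_gt0.
move=> n_gt1; apply/RltP.
have := @Rpower.ln_increasing 1 n%:R; rewrite Rpower.ln_1; apply; apply/RltP.
  exact: ltr01.
by rewrite ltr1n.
Qed.

Lemma finField_card_gt1 (F : finFieldType) : (1 < #|F|)%N.
Proof. by apply/card_gt1P; exists 0, 1; rewrite !inE eq_sym oner_neq0. Qed.

Lemma cnf_share_lenE (k t : nat) (j : 'I_k) : cnf_share_len t j = 'C(k.-1, t).
Proof.
rewrite -[k in RHS](card_ord k) -(cardsC1 j) -cards_draws.
rewrite /cnf_share_len -(card_imset [pred T : tsets k t | j \notin val T] val_inj).
apply: eq_card => A.
rewrite !inE; apply/imsetP/andP => [[T jT ->]|[jA /eqP cA]].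
  split; last exact: (valP T).
  by apply/subsetP => i iT; rewrite !inE; apply: contraNneq jT => <-.
have {}jA : j \notin A by apply/negP => /(subsetP jA); rewrite !inE eqxx.
by exists (Sub A (introT eqP cA)).
Qed.

Lemma cnf_upload_costE (F : finFieldType) (k t l m : nat) :
  cnf_upload_cost F k t l m = (k * l * m * 'C(k.-1, t))%:R * log2 #|F|.
Proof.
have F_gt0 : (0 < #|F|)%N by apply/card_gt0P; exists 0.
rewrite /cnf_upload_cost.
under eq_bigr do under eq_bigr do rewrite cnf_share_lenE (log2X _ F_gt0).
rewrite !sumr_const card_prod !card_ord -!mulrnA -mulrnAl.
by rewrite -mulr_natr -natrM mulnC !mulnA.
Qed.

Lemma download_rate_const (F : finFieldType) (k l b : nat) :
  (0 < k)%N -> (0 < b)%N ->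
  download_rate F l (fun _ : 'I_k => b) = l%:R / (k * b)%:R.
Proof.
move=> k_gt0 b_gt0; have F_gt0 : (0 < #|F|)%N by apply/card_gt0P; exists 0.
rewrite /download_rate /download_cost sumr_const card_ord !(log2X _ F_gt0).
have log2F_neq0 : log2 #|F| != 0 by rewrite gt_eqF // log2_gt0 ?finField_card_gt1.
have k_neq0 : (k%:R : Rdefinitions.R) != 0 by rewrite pnatr_eq0 -lt0n.
have b_neq0 : (b%:R : Rdefinitions.R) != 0 by rewrite pnatr_eq0 -lt0n.
rewrite -mulr_natl natrM; field.
by rewrite log2F_neq0 k_neq0 b_neq0.
Qed.

Lemma tsets_superset (k t : nat) (S : {set 'I_k}) :
  (#|S| <= t <= k)%N -> exists T : tsets k t, S \subset val T.
Proof.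
case/andP=> St tk.
have cardSC : #|~: S| = (k - #|S|)%N by rewrite cardsCs card_ord setCK.
have : (0 < #|[set A : {set 'I_k} | A \subset ~: S & #|A| == t - #|S|]|)%N.
  by rewrite cards_draws cardSC bin_gt0 leq_sub2r.
case/card_gt0P => A; rewrite inE => /andP [AS /eqP cardA].
have cardSA : #|S :|: A| == t.
  have /disjoint_setI0 SA0 : [disjoint S & A] by rewrite disjoint_sym disjoints_subset.
  by rewrite cardsU SA0 cards0 subn0 cardA subnKC.
by exists (Sub (S :|: A) cardSA); rewrite subsetUl.
Qed.

Section CnfPrivacy.
Variables (F : finFieldType) (k t l m : nat).

Definition views_with (x : 'I_l -> 'I_m -> F) (S : {set 'I_k})
    (V : {ffun 'I_k -> {ffun 'I_l * 'I_m -> cnf_vec F k t}}) :=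
  [set rho : joint_cnf F k t l m | joint_valid x rho &
     [forall j in S, joint_share j rho == V j]].

Lemma card_views_with_le (S : {set 'I_k}) (T0 : tsets k t) x x' V :
  S \subset val T0 -> (#|views_with x S V| <= #|views_with x' S V|)%N.
Proof.
move=> ST0.
pose shift (rho : joint_cnf F k t l m) : joint_cnf F k t l m :=
  [ffun ri => [ffun T => rho ri T + if T == T0 then x' ri.1 ri.2 - x ri.1 ri.2 else 0]].
have shift_inj : injective shift.
  move=> rho1 rho2 /ffunP eq12; apply/ffunP => ri; apply/ffunP => T.
  by have /ffunP/(_ T) := eq12 ri; rewrite !ffunE => /addIr.
rewrite -(card_imset _ shift_inj); apply/subset_leq_card/subsetP => _ /imsetP [rho + ->].
rewrite !inE => /andP [rho_valid rho_V]; apply/andP; split.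
  apply/forallP => ri; rewrite /cnf_valid ffunE.
  under eq_bigr do rewrite ffunE.
  rewrite big_split /= -big_mkcond big_pred1_eq.
  by rewrite (eqP (forallP rho_valid ri)) addrC subrK.
apply/forall_inP => j jS; rewrite -(eqP (forall_inP rho_V j jS)).
apply/eqP/ffunP => ri; rewrite !ffunE; apply/ffunP => T; rewrite !ffunE.
case: ifP => // jT; case: eqP => [eT|_]; last by rewrite addr0.
by move: jT; rewrite eT (subsetP ST0 j jS).
Qed.

Lemma cnf_privacy : (t <= k)%N -> cnf_t_private F k t l m.
Proof.
move=> tk S St x x' V.
have [T0 ST0] : exists T0 : tsets k t, S \subset val T0 by apply: tsets_superset; rewrite St.
by apply/eqP; rewrite eqn_leq; apply/andP; split; exact: card_views_with_le ST0.
Qed.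

End CnfPrivacy.

Section LinearCodes.
Variables (F : fieldType) (k b : nat) (C : {vspace 'M[F]_(k, b)}).

Definition mask_rows (U : {set 'I_k}) (M : 'M[F]_(k, b)) : 'M[F]_(k, b) :=
  \matrix_(i, j) if i \in U then 0 else M i j.

(* Column r is g r read as a vector; so mxvec W *m gen_mx g lists the pairings of W with the g r. *)
Definition gen_mx {l : nat} (g : 'I_l -> 'M[F]_(k, b)) : 'M[F]_(k * b, l) :=
  \matrix_(n, r) mxvec (g r) 0 n.

Lemma mask_rowsK (U : {set 'I_k}) (M : 'M[F]_(k, b)) :
  mask_rows U (mask_rows U M) = mask_rows U M.
Proof. by apply/matrixP => i j; rewrite !mxE; case: (i \in U). Qed.

Lemma code_dim_ge (l : nat) : (0 < k)%N -> (0 < b)%N ->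
  l%:R / (k * b)%:R <= code_rate C -> (l <= \dim C)%N.
Proof.
move=> k_gt0 b_gt0; rewrite /code_rate [(b * k)%N]mulnC.
by rewrite ler_pM2r ?invr_gt0 ?ltr0n ?muln_gt0 ?k_gt0 ?b_gt0 // ler_nat.
Qed.

Lemma code_free_family (l : nat) : (l <= \dim C)%N ->
  exists g : 'I_l -> 'M[F]_(k, b), (forall r, g r \in C) /\
    (forall a : 'I_l -> F, \sum_r a r *: g r = 0 -> forall r, a r = 0).
Proof.
move=> l_le_dim; pose s := take l (vbasis C).
have size_s : size s == l by rewrite size_takel // size_tuple.
exists (fun r => s`_r); split=> [r|].
  by apply/vbasis_mem/(@mem_take l); rewrite mem_nth // (eqP size_s).
have : free s.
  have := basis_free (vbasisP C); rewrite -(cat_take_drop l (vbasis C)).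
  exact: catl_free.
by move=> free_s; have /freeP := (free_s : free (Tuple size_s)).
Qed.

Section FreeFamily.
Variables (l : nat) (g : 'I_l -> 'M[F]_(k, b)).
Hypothesis g_code : forall r, g r \in C.
Hypothesis g_free : forall a : 'I_l -> F, \sum_r a r *: g r = 0 -> forall r, a r = 0.

Lemma code_dist_le_len (D : nat) : (0 < l)%N -> code_dist_ge C D -> (D <= k)%N.
Proof.
move=> l_gt0 dist; pose r0 : 'I_l := Ordinal l_gt0.
have g0_neq0 : g r0 != 0.
  apply: contra_neq (@oner_neq0 F) => g0_eq0.
  have := @g_free (fun r => (r == r0)%:R) _ r0; rewrite eqxx; apply.
  by apply: big1 => r _; case: eqP => [->|_]; rewrite ?g0_eq0 ?scaler0 ?scale0r.
apply: leq_trans (dist _ _ (g_code r0) (mem0v C) g0_neq0) _.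
by rewrite -[X in (_ <= X)%N]card_ord max_card.
Qed.

Section Erasures.
Variable D : nat.
Hypothesis dist : code_dist_ge C D.+1.

Lemma masked_codeword_eq0 (U : {set 'I_k}) (c : 'M[F]_(k, b)) :
  (#|U| <= D)%N -> c \in C -> mask_rows U c = 0 -> c = 0.
Proof.
move=> card_U cC mask_c0; apply/eqP; apply: contraT => c_neq0.
have : [set i | row i c != row i 0] \subset U.
  apply/subsetP => i; rewrite inE; apply: contraNT => iU.
  apply/eqP/rowP => j; have /matrixP/(_ i j) := mask_c0.
  by rewrite !mxE (negbTE iU).
move/subset_leq_card/leq_trans/(_ card_U).
by rewrite leqNgt (dist cC (mem0v C) c_neq0).
Qed.

Lemma masked_gen_row_free (U : {set 'I_k}) :
  (#|U| <= D)%N -> row_free (gen_mx (fun r => mask_rows U (g r)))^T.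
Proof.
move=> card_U; apply: inj_row_free => v /rowP v_eq0; apply/rowP => r; rewrite mxE.
pose c := \sum_r v 0 r *: g r.
have cC : c \in C by apply: memv_suml => r' _; apply: memvZ.
suff /(@g_free (v 0)) -> : c = 0 by [].
apply: (masked_codeword_eq0 card_U cC); apply/matrixP => i j; rewrite !mxE.
case: ifP => // iU; rewrite summxE.
transitivity ((v *m (gen_mx (fun r => mask_rows U (g r)))^T) 0 (mxvec_index i j)).
  by rewrite !mxE; apply: eq_bigr => r' _; rewrite !mxE mxvecE !mxE iU.
by rewrite v_eq0 mxE.
Qed.

Lemma dual_weight_exists (U : {set 'I_k}) (r : 'I_l) : (#|U| <= D)%N ->
  exists W, mask_rows U W = W /\ mxvec W *m gen_mx g = delta_mx 0 r.
Proof.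
move/masked_gen_row_free/row_freeP => [B gB].
exists (mask_rows U (vec_mx (col r B)^T)); split; first exact: mask_rowsK.
apply/rowP => r'; transitivity (((gen_mx (fun r => mask_rows U (g r)))^T *m B) r' r).
  rewrite !mxE; apply: eq_bigr => n _; case/mxvec_indexP: n => i j.
  by rewrite !mxE !mxvecE !mxE; case: (i \in U); rewrite ?mul0r ?mulr0 // mulrC.
by rewrite gB !mxE eqxx eq_sym.
Qed.

Lemma dual_weights_exist : exists W : {set 'I_k} -> 'I_l -> 'M[F]_(k, b),
  (forall U r, mask_rows U (W U r) = W U r) /\
  (forall (U : {set 'I_k}) r, (#|U| <= D)%N -> mxvec (W U r) *m gen_mx g = delta_mx 0 r).
Proof.
suff /fin_all_exists [W W_spec] : forall U : {set 'I_k}, exists WU : 'I_l -> 'M[F]_(k, b),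
    forall r, mask_rows U (WU r) = WU r /\
      ((#|U| <= D)%N -> mxvec (WU r) *m gen_mx g = delta_mx 0 r).
  by exists W; split=> U r; [exact: (W_spec U r).1 | exact: (W_spec U r).2].
move=> U; have [card_U|_] := boolP (#|U| <= D)%N; last first.
  by exists (fun _ => mask_rows U 0) => r; rewrite mask_rowsK.
have /fin_all_exists [WU WU_spec] := fun r => dual_weight_exists r card_U.
by exists WU => r; have [maskW pairW] := WU_spec r.
Qed.

End Erasures.
End FreeFamily.
End LinearCodes.

Lemma card_bigcup_le (I T : finType) (P : pred I) (A : I -> {set T}) :
  (#|\bigcup_(i | P i) A i| <= \sum_(i | P i) #|A i|)%N.
Proof.
elim/big_rec2: _ => [|i s S _ IH]; first by rewrite cards0.
by rewrite cardsU; apply: leq_trans (leq_subr _ _) _; rewrite leq_add2l.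
Qed.

Section MsizeBounds.
Variables (R : idomainType) (n : nat).
Implicit Types p q : {mpoly R[n]}.

Lemma msize_sum_le (c : nat) (I : Type) (r : seq I) (P : pred I) (f : I -> {mpoly R[n]}) :
  (forall i, P i -> msize (f i) <= c)%N -> (msize (\sum_(i <- r | P i) f i) <= c)%N.
Proof.
move=> f_le; elim/big_ind: _ => //; first by rewrite msize0.
by move=> p q p_le q_le; apply: leq_trans (msizeD_le _ _) _; rewrite geq_max p_le q_le.
Qed.

Lemma msizeM_le_pred p q : (msize (p * q) <= (msize p + msize q).-1)%N.
Proof.
have [->|p_neq0] := eqVneq p 0; first by rewrite mul0r msize0.
have [->|q_neq0] := eqVneq q 0; first by rewrite mulr0 msize0.
by rewrite msizeM.
Qed.

Lemma msize_linearX_le p (e : nat) : (msize p <= 2)%N -> (msize (p ^+ e) <= e.+1)%N.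
Proof.
move=> p_le2; elim: e => [|e IH]; first by rewrite expr0 msize1.
by rewrite exprS; apply: leq_trans (msizeM_le_pred _ _) _; lia.
Qed.

Lemma msize_comp_linear_le (m : nat) (lq : m.-tuple {mpoly R[n]}) (p : {mpoly R[m]}) :
  (forall i, msize (tnth lq i) <= 2)%N -> (msize (p \mPo lq) <= msize p)%N.
Proof.
move=> lq_le2; rewrite comp_mpolyE big_seq; apply: msize_sum_le => mono mono_p.
apply: leq_trans (msizeZ_le _ _) (leq_trans _ (msize_mdeg_lt mono_p)).
rewrite mdegE; elim/big_rec2: _ => [|i q e _ IH]; first by rewrite msize1.
apply: leq_trans (msizeM_le_pred _ _) _.
by have := msize_linearX_le (mono i) (lq_le2 i); lia.
Qed.

End MsizeBounds.

Section CnfPolynomialHSS.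
Variables (F : finFieldType) (k t l m b d : nat).
Variables (g : 'I_l -> 'M[F]_(k, b)) (W : {set 'I_k} -> 'I_l -> 'M[F]_(k, b)).
Hypothesis W_mask : forall U r, mask_rows U (W U r) = W U r.
Hypothesis W_pair :
  forall (U : {set 'I_k}) r, (#|U| <= d * t)%N -> mxvec (W U r) *m gen_mx g = delta_mx 0 r.

Local Notation N := #|{: 'I_m * tsets k t}|.
Local Notation view := {ffun 'I_l * 'I_m -> cnf_vec F k t}.

(* The variable of index enum_rank (i, T) stands for the share x_{i,T}. *)
Definition cnf_sum_poly : m.-tuple {mpoly F[N]} :=
  [tuple \sum_(T : tsets k t) 'X_(enum_rank (i, T)) | i < m].

Definition share_value (v : view) (r : 'I_l) (n : 'I_N) : F :=
  v (r, (enum_val n).1) (enum_val n).2.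

(* The servers that miss one of the shares occurring in mono. *)
Definition blind_servers (mono : 'X_{1..N}) : {set 'I_k} :=
  \bigcup_(n | mono n != 0%N) val (enum_val n).2.

Definition hss_matrix (P : 'I_l -> {mpoly F[m]}) (v : view) : 'M[F]_(k, b) :=
  \sum_(r < l) \sum_(mono <- msupp (P r \mPo cnf_sum_poly))
    ((P r \mPo cnf_sum_poly)@_mono * \prod_n share_value v r n ^+ mono n)
      *: W (blind_servers mono) r.

Definition hss_eval (P : 'I_l -> {mpoly F[m]}) (j : 'I_k) (v : view) : 'rV[F]_b :=
  row j (hss_matrix P v).

Definition hss_rec (y : 'I_k -> 'rV[F]_b) (r : 'I_l) : F :=
  (mxvec (\matrix_(j, c) y j 0 c) *m gen_mx g) 0 r.

Lemma hss_rec_linear : Rec_linear (bj := fun _ => b) hss_rec.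
Proof.
move=> c y y' r; rewrite /hss_rec.
rewrite (_ : \matrix_(j, c0) _ = c *: \matrix_(j, c0) y j 0 c0 + \matrix_(j, c0) y' j 0 c0).
  by rewrite linearD linearZ /= mulmxDl -scalemxAl !mxE.
by apply/matrixP => j c0; rewrite !mxE.
Qed.

Lemma card_blind_servers (mono : 'X_{1..N}) : (#|blind_servers mono| <= t * mdeg mono)%N.
Proof.
apply: leq_trans (card_bigcup_le _ _) _.
rewrite mdegE big_distrr /= big_mkcond /=; apply: leq_sum => n _.
case: eqP => [->|mn_neq0] //=; rewrite (eqP (valP (enum_val n).2)).
by rewrite leq_pmulr // lt0n; apply/eqP.
Qed.

Lemma card_blind_servers_supp (p : {mpoly F[m]}) (mono : 'X_{1..N}) :
  inPOLY d p -> mono \in msupp (p \mPo cnf_sum_poly) -> (#|blind_servers mono| <= d * t)%N.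
Proof.
move=> p_deg mono_supp; apply: leq_trans (card_blind_servers mono) _.
rewrite mulnC leq_mul // -ltnS; apply: leq_trans (msize_mdeg_lt mono_supp) _.
apply: leq_trans (msize_comp_linear_le _ _) p_deg => i.
rewrite tnth_mktuple; apply: msize_sum_le => T _.
by rewrite msizeX mdeg1.
Qed.

Lemma hss_matrix_share (P : 'I_l -> {mpoly F[m]}) (j : 'I_k) (rho : joint_cnf F k t l m) :
  row j (hss_matrix P (joint_share j rho)) = row j (hss_matrix P rho).
Proof.
apply/rowP => c; rewrite !mxE !summxE; apply: eq_bigr => r _.
rewrite !summxE; apply: eq_bigr => mono _; rewrite !mxE.
have [j_blind|j_sees] := boolP (j \in blind_servers mono).
  by rewrite -W_mask mxE j_blind !mulr0.
congr (_ * _ * _); apply: eq_bigr => n _.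
have [->|mn_neq0] := eqVneq (mono n) 0%N; first by rewrite !expr0.
have jT : j \notin val (enum_val n).2.
  by apply: contra j_sees => jT; apply/bigcupP; exists n.
by rewrite /share_value /joint_share ffunE /cnf_share ffunE jT.
Qed.

Lemma cnf_sum_poly_meval (p : {mpoly F[m]}) (x : 'I_l -> 'I_m -> F)
    (rho : joint_cnf F k t l m) (r : 'I_l) :
  joint_valid x rho -> (p \mPo cnf_sum_poly).@[share_value rho r] = p.@[x r].
Proof.
move=> rho_valid; rewrite comp_mpoly_meval; apply: meval_eq => i.
rewrite tnth_mktuple raddf_sum /=.
under eq_bigr do rewrite mevalXU /share_value enum_rankK /=.
exact: (eqP (forallP rho_valid (r, i))).
Qed.

Lemma hss_matrix_pairing (P : 'I_l -> {mpoly F[m]}) (x : 'I_l -> 'I_m -> F)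
    (rho : joint_cnf F k t l m) (r0 : 'I_l) :
  (forall r, inPOLY d (P r)) -> joint_valid x rho ->
  (mxvec (hss_matrix P rho) *m gen_mx g) 0 r0 = (P r0).@[x r0].
Proof.
move=> P_deg rho_valid.
have pair_term r mono : mono \in msupp (P r \mPo cnf_sum_poly) ->
    (mxvec (W (blind_servers mono) r) *m gen_mx g) 0 r0 = (r0 == r)%:R.
  move=> mono_supp; rewrite W_pair ?mxE ?eqxx //.
  exact: card_blind_servers_supp (P_deg r) mono_supp.
rewrite -(cnf_sum_poly_meval _ r0 rho_valid) mevalE /hss_matrix.
rewrite linear_sum mulmx_suml summxE (bigD1 r0) //= [X in _ + X]big1 => [|r r_neq].
  rewrite addr0 linear_sum mulmx_suml summxE !big_seq; apply: eq_bigr => mono mono_supp.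
  by rewrite linearZ -scalemxAl mxE pair_term // eqxx mulr1.
rewrite linear_sum mulmx_suml summxE big_seq big1 // => mono mono_supp.
by rewrite linearZ -scalemxAl mxE pair_term // eq_sym (negbTE r_neq) mulr0.
Qed.

Lemma hss_correct (P : 'I_l -> {mpoly F[m]}) : (forall r, inPOLY d (P r)) ->
  forall (x : 'I_l -> 'I_m -> F) (rho : joint_cnf F k t l m), joint_valid x rho ->
  forall r, hss_rec (fun j => hss_eval P j (joint_share j rho)) r = (P r).@[x r].
Proof.
move=> P_deg x rho rho_valid r; rewrite -(hss_matrix_pairing r P_deg rho_valid) /hss_rec.
congr ((mxvec _ *m _) 0 r); apply/matrixP => j c.
by rewrite mxE /hss_eval hss_matrix_share mxE.
Qed.

Lemma cnf_hss : (t <= k)%N -> is_CNF_linear_HSS d hss_eval hss_rec.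
Proof.
by move=> tk; split; [exact: hss_rec_linear | exact: hss_correct | exact: cnf_privacy].
Qed.

End CnfPolynomialHSS.

Theorem mainTheorem5 (l t k d m : nat) (F : finFieldType) :
  (0 < l)%N -> (0 < t)%N -> (0 < k)%N -> (0 < d)%N -> (0 < m)%N ->
  forall b : nat, (l%:R / k%:R < b%:R :> rat) ->
  (exists C : {vspace 'M[F]_(k, b)},
      l%:R / (k * b)%:R <= code_rate C /\ code_dist_ge C (d * t + 1)) ->
  exists (bj : 'I_k -> nat)
         (Eval : forall (P : 'I_l -> {mpoly F[m]}) (j : 'I_k),
                   {ffun 'I_l * 'I_m -> cnf_vec F k t} -> 'rV[F]_(bj j))
         (Rec : (forall j : 'I_k, 'rV[F]_(bj j)) -> 'I_l -> F),
    [/\ is_CNF_linear_HSS d Eval Rec,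
        download_rate F l bj = l%:R / (k * b)%:R
      & cnf_upload_cost F k t l m = (k * l * m * 'C(k.-1, t))%:R * log2 #|F|].
Proof.
move=> l_gt0 _ k_gt0 d_gt0 _ b lk_lt_b [C [rateC distC]].
have b_gt0 : (0 < b)%N.
  by rewrite lt0n; apply: contraTneq lk_lt_b => ->; rewrite ltNge divr_ge0 ?ler0n.
have [g [g_code g_free]] := code_free_family (code_dim_ge k_gt0 b_gt0 rateC).
have t_le_k : (t <= k)%N.
  by have := code_dist_le_len g_code g_free l_gt0 distC; nia.
rewrite addn1 in distC.
have [W [W_mask W_pair]] := dual_weights_exist g_code g_free distC.
exists (fun _ => b), (hss_eval W), (hss_rec g); split.
- exact: cnf_hss W_mask W_pair t_le_k.
- exact: download_rate_const.
- exact: cnf_upload_costE.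
Qed.
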